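(* There exist two upper semicomputable symmetric functions $E_1,E_2$ from pairs of binary strings to $\mathbb{N}\cup\{\infty\}$, each of which satisfies the triangle inequality and the condition that there is a constant $c$ with $\#\{y : E_i(x,y)<n\}\le c2^n$ for all integers $n$ and strings $x$, such that no non-negative function $E$ on pairs of binary strings that is bounded by both $E_1$ and $E_2$ satisfies both this counting condition (for some constant $c$) and the triangle inequality.
   Context: A function $E$ is upper semicomputable if the set of triples $(x,y,n)$ with $E(x,y)<n$ is computably enumerable. The triangle inequality means $E(x,z)\le E(x,y)+E(y,z)$ for all strings $x,y,z$. *)

From HB Require Import structures.
From mathcomp Require Import all_boot all_order all_algebra.
From mathcomp Require Import reals.
Set Implicit Arguments. Unset Strict Implicit. Unset Printing Implicit Defensive.
Import Order.TTheory GRing.Theory Num.Theory.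
Local Open Scope ring_scope.

Notation bstring := (seq bool).

(** * A model of computation: (untyped) primitive recursive functions.
    Arguments are read from a list, missing arguments default to 0. *)
Inductive prf : Type :=
| PZero
| PSucc
| PProj of nat
| PComp of prf & seq prf
| PRec of prf & prf.

Fixpoint prf_eval (f : prf) (v : seq nat) {struct f} : nat :=
  match f with
  | PZero => 0%N
  | PSucc => (head 0%N v).+1
  | PProj i => nth 0%N v i
  | PComp g hs =>
      prf_eval g ((fix evs (l : seq prf) : seq nat :=
                     match l with
                     | [::] => [::]
                     | h :: t => prf_eval h v :: evs t
                     end) hs)
  | PRec g h =>
      let rest := behead v in
      (fix r (k : nat) : nat :=
         match k with
         | 0 => prf_eval g rest
         | k'.+1 => prf_eval h (k' :: r k' :: rest)
         end) (head 0%N v)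
  end.

(** A predicate on a countable type is computably enumerable if it is the
    set of (codes of) outputs of some primitive recursive enumerator
    (output 0 = "nothing enumerated at this step", output m.+1 = code m).
    Codes are given by MathComp's canonical computable injection [pickle]. *)
Definition comp_enum (T : countType) (P : T -> Prop) : Prop :=
  exists f : prf, forall a : T,
    P a <-> exists t : nat, prf_eval f [:: t] = (pickle a).+1.

Inductive natinf : Type := Fin of nat | Inf.

Definition addni (a b : natinf) : natinf :=
  match a, b with Fin m, Fin n => Fin (m + n) | _, _ => Inf end.

Definition leni (a b : natinf) : Prop :=
  match a, b with
  | _, Inf => True
  | Inf, Fin _ => False
  | Fin m, Fin n => (m <= n)%N
  end.

Definition ltni_int (a : natinf) (n : int) : Prop :=
  match a with Fin m => (m%:Z < n)%R | Inf => False end.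

Definition le_real_ni (R : realType) (r : R) (a : natinf) : Prop :=
  match a with Fin m => r <= m%:R | Inf => True end.

Definition upper_semicomputable (E : bstring -> bstring -> natinf) : Prop :=
  comp_enum (fun t : bstring * bstring * int => ltni_int (E t.1.1 t.1.2) t.2).

Definition symmetric_ni (E : bstring -> bstring -> natinf) : Prop :=
  forall x y, E x y = E y x.

Definition triangle_ni (E : bstring -> bstring -> natinf) : Prop :=
  forall x y z, leni (E x z) (addni (E x y) (E y z)).

Definition triangle_R (R : realType) (E : bstring -> bstring -> R) : Prop :=
  forall x y z, E x z <= E x y + E y z.

(** "#{y : lt x y n} <= c 2^n" for every integer n and string x: every finite
    list of distinct such y has length at most c 2^n (so an infinite set
    violates the bound). *)
Definition counting_cond (R : realType)
    (lt : bstring -> bstring -> int -> Prop) : Prop :=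
  exists c : R, forall (n : int) (x : bstring) (s : seq bstring),
    uniq s -> (forall y, y \in s -> lt x y n) ->
    (size s)%:R <= c * (2 : R) ^ n.

Definition counting_ni (R : realType) (E : bstring -> bstring -> natinf) :=
  counting_cond R (fun x y n => ltni_int (E x y) n).

Definition counting_R (R : realType) (E : bstring -> bstring -> R) :=
  counting_cond R (fun x y n => E x y < n%:~R).

From mathcomp Require Import all_boot all_order all_algebra.
From mathcomp Require Import reals.
From mathcomp Require Import zify.
Import Order.TTheory GRing.Theory Num.Theory.

(* E1 and E2 are zero-or-infinity distances on the strings 0^k: E1 vanishes
   exactly inside the blocks {0^(2h), 0^(2h+1)} and E2 exactly inside the
   shifted blocks {0^(2h-1), 0^(2h)}.  Both are equivalence-relation
   indicators with classes of size at most two, hence symmetric, triangular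
   and within the counting bound, and they are enumerable by a primitive
   recursive function through Cantor unpairing.  Any E below both vanishes
   on every consecutive pair (0^k, 0^(k+1)), so by the triangle inequality
   E(empty, 0^k) <= 0 for all k: infinitely many y with E(empty, y) < 1. *)

Lemma prf_eval_comp g hs v :
  prf_eval (PComp g hs) v = prf_eval g [seq prf_eval h v | h <- hs].
Proof. by rewrite /=; congr (prf_eval g _); elim: hs => //= h hs ->. Qed.

Lemma prf_eval_rec g h k rest :
  prf_eval (PRec g h) (k :: rest) =
  iteri k (fun i r => prf_eval h [:: i, r & rest]) (prf_eval g rest).
Proof. by elim: k => //= k <-. Qed.

Definition prec (g h F : prf) (Gs : seq prf) : prf := PComp (PRec g h) (F :: Gs).

Lemma prf_eval_prec g h F Gs v :
  let ws := [seq prf_eval G v | G <- Gs] in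
  prf_eval (prec g h F Gs) v =
  iteri (prf_eval F v) (fun i r => prf_eval h [:: i, r & ws]) (prf_eval g ws).
Proof. by rewrite /prec prf_eval_comp prf_eval_rec. Qed.

Definition psucc (F : prf) : prf := PComp PSucc [:: F].

Lemma prf_eval_succ F v : prf_eval (psucc F) v = (prf_eval F v).+1.
Proof. by []. Qed.

Fixpoint pconst (n : nat) : prf := if n is m.+1 then psucc (pconst m) else PZero.

Lemma prf_eval_const n v : prf_eval (pconst n) v = n.
Proof. by elim: n => //= n ->. Qed.

Definition padd (F G : prf) : prf := prec (PProj 0) (psucc (PProj 1)) F [:: G].

Lemma prf_eval_add F G v : prf_eval (padd F G) v = prf_eval F v + prf_eval G v.
Proof. by rewrite prf_eval_prec; elim: (prf_eval F v) => //= n ->. Qed.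

Definition pmul (F G : prf) : prf := prec PZero (padd (PProj 1) (PProj 2)) F [:: G].

Lemma prf_eval_mul F G v : prf_eval (pmul F G) v = prf_eval F v * prf_eval G v.
Proof.
rewrite prf_eval_prec; elim: (prf_eval F v) => // n IH.
by rewrite iteriS prf_eval_add IH mulSn addnC.
Qed.

Definition psub (F G : prf) : prf :=
  prec (PProj 0) (prec PZero (PProj 0) (PProj 1) [::]) G [:: F].

Lemma prf_eval_sub F G v : prf_eval (psub F G) v = prf_eval F v - prf_eval G v.
Proof.
rewrite prf_eval_prec; elim: (prf_eval G v) => [|n IH]; first by rewrite subn0.
by rewrite iteriS prf_eval_prec IH subnS; case: (_ - _).
Qed.

Definition ppow2 (F : prf) : prf := prec (pconst 1) (padd (PProj 1) (PProj 1)) F [::].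

Lemma prf_eval_pow2 F v : prf_eval (ppow2 F) v = 2 ^ prf_eval F v.
Proof.
rewrite prf_eval_prec prf_eval_const; elim: (prf_eval F v) => // n IH.
by rewrite iteriS prf_eval_add IH expnS mul2n addnn.
Qed.

Definition phalf (F : prf) : prf := prec PZero (psub (PProj 0) (PProj 1)) F [::].

Lemma prf_eval_half F v : prf_eval (phalf F) v = (prf_eval F v)./2.
Proof.
rewrite prf_eval_prec; elim: (prf_eval F v) => // n IH.
rewrite iteriS prf_eval_sub IH /= uphalf_half -{1}(odd_double_half n) -addnn; lia.
Qed.

Definition peq (F G : prf) : prf := psub (pconst 1) (padd (psub F G) (psub G F)).

Lemma prf_eval_eq F G v : prf_eval (peq F G) v = (prf_eval F v == prf_eval G v).
Proof.
rewrite prf_eval_sub prf_eval_const prf_eval_add !prf_eval_sub.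
by case: eqP => [->|]; rewrite ?subnn //; lia.
Qed.

(* [cantor_diag t] is the largest d with 'C(d.+1, 2) <= t: it increases exactly
   when t passes the next triangular number. *)
Fixpoint cantor_diag (t : nat) : nat :=
  if t is k.+1 then
    cantor_diag k + (k - 'C((cantor_diag k).+1, 2) == cantor_diag k)
  else 0.

Definition cantor (i j : nat) : nat := 'C((i + j).+1, 2) + i.
Definition cantor_fst (t : nat) : nat := t - 'C((cantor_diag t).+1, 2).
Definition cantor_snd (t : nat) : nat := cantor_diag t - cantor_fst t.

Lemma cantor_diag_bin d j : j <= d -> cantor_diag ('C(d.+1, 2) + j) = d.
Proof.
elim: d j => [|d IHd] j; first by rewrite leqn0 => /eqP ->.
elim: j => [_|j IHj lt_jd].
  have -> : 'C(d.+2, 2) + 0 = ('C(d.+1, 2) + d).+1 by rewrite binS bin1 addn0 addnS.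
  by rewrite [LHS]/= IHd // addKn eqxx addn1.
rewrite addnS [LHS]/= IHj ?(ltnW lt_jd) // addKn.
by rewrite (ltn_eqF lt_jd) addn0.
Qed.

Lemma cantor_fstK i j : cantor_fst (cantor i j) = i.
Proof. by rewrite /cantor_fst /cantor cantor_diag_bin ?leq_addr // addKn. Qed.

Lemma cantor_sndK i j : cantor_snd (cantor i j) = j.
Proof.
by rewrite /cantor_snd cantor_fstK /cantor cantor_diag_bin ?leq_addr // addKn.
Qed.

Definition pbin2 (F : prf) : prf := prec PZero (padd (PProj 1) (psucc (PProj 0))) F [::].

Lemma prf_eval_bin2 F v : prf_eval (pbin2 F) v = 'C((prf_eval F v).+1, 2).
Proof.
rewrite prf_eval_prec; elim: (prf_eval F v) => // n IH.
by rewrite iteriS prf_eval_add prf_eval_succ IH [RHS]binS bin1.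
Qed.

Definition pcantor_diag (F : prf) : prf :=
  prec PZero (padd (PProj 1) (peq (psub (PProj 0) (pbin2 (PProj 1))) (PProj 1))) F [::].

Lemma prf_eval_cantor_diag F v : prf_eval (pcantor_diag F) v = cantor_diag (prf_eval F v).
Proof.
rewrite prf_eval_prec; elim: (prf_eval F v) => // n IH.
by rewrite iteriS prf_eval_add prf_eval_eq prf_eval_sub prf_eval_bin2 IH.
Qed.

Definition pcantor_fst (F : prf) : prf := psub F (pbin2 (pcantor_diag F)).
Definition pcantor_snd (F : prf) : prf := psub (pcantor_diag F) (pcantor_fst F).

Lemma prf_eval_cantor_fst F v : prf_eval (pcantor_fst F) v = cantor_fst (prf_eval F v).
Proof. by rewrite prf_eval_sub prf_eval_bin2 prf_eval_cantor_diag. Qed.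

Lemma prf_eval_cantor_snd F v : prf_eval (pcantor_snd F) v = cantor_snd (prf_eval F v).
Proof. by rewrite prf_eval_sub prf_eval_cantor_diag prf_eval_cantor_fst. Qed.

Lemma code2E p q : CodeSeq.code [:: p; q] = 2 ^ p * (2 ^ q).*2.+1.
Proof. by rewrite /CodeSeq.code /= muln1. Qed.

Lemma pickle_zeros a : pickle (nseq a false) = 2 ^ a - 1.
Proof.
elim: a => [//|a IH].
have -> : pickle (nseq a.+1 false) = (pickle (nseq a false)).*2.+1 by rewrite [LHS]mul1n.
by rewrite IH expnS; have := expn_gt0 2 a; lia.
Qed.

Lemma pickle_Posz m : pickle (Posz m) = 3 * 2 ^ (2 ^ m).
Proof.
have -> : pickle (Posz m) = CodeSeq.code [:: CodeSeq.code [:: m]; 0] by [].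
by rewrite code2E /CodeSeq.code /= muln1 mulnC.
Qed.

Definition pcode2 (F G : prf) : prf :=
  pmul (ppow2 F) (psucc (padd (ppow2 G) (ppow2 G))).

Lemma prf_eval_code2 F G v :
  prf_eval (pcode2 F G) v = CodeSeq.code [:: prf_eval F v; prf_eval G v].
Proof. by rewrite code2E prf_eval_mul prf_eval_succ prf_eval_add !prf_eval_pow2 addnn. Qed.

Definition pzeros (F : prf) : prf := psub (ppow2 F) (pconst 1).

Lemma prf_eval_zeros F v : prf_eval (pzeros F) v = pickle (nseq (prf_eval F v) false).
Proof. by rewrite pickle_zeros prf_eval_sub prf_eval_pow2 prf_eval_const. Qed.

Definition pPosz (F : prf) : prf := pmul (pconst 3) (ppow2 (ppow2 F)).

Lemma prf_eval_Posz F v : prf_eval (pPosz F) v = pickle (Posz (prf_eval F v)).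
Proof. by rewrite pickle_Posz prf_eval_mul prf_eval_const !prf_eval_pow2. Qed.

Lemma comp_enum_filtered (T : countType) (P : T -> Prop) (F : prf)
    (c : nat -> bool) (g : nat -> T) :
  (forall t, prf_eval F [:: t] = c t * (pickle (g t)).+1) ->
  (forall a, P a <-> exists2 t, c t & g t = a) ->
  comp_enum P.
Proof.
move=> evalF defP; exists F => a; rewrite defP; split.
  by move=> [t ct <-]; exists t; rewrite evalF ct mul1n.
move=> [t]; rewrite evalF; case ct: (c t) => //; rewrite mul1n => -[].
by move/(pcan_inj pickleK); exists t.
Qed.

Definition rel_dist (r : rel bstring) (x y : bstring) : natinf :=
  if r x y then Fin 0 else Inf.

Lemma ltni_rel_dist r x y n : ltni_int (rel_dist r x y) n <-> r x y /\ (0 < n)%R.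
Proof. by rewrite /rel_dist; case: (r x y) => //=; split=> [|[]]. Qed.

Lemma rel_dist_sym r : symmetric r -> symmetric_ni (rel_dist r).
Proof. by move=> r_sym x y; rewrite /rel_dist r_sym. Qed.

Lemma rel_dist_triangle r : transitive r -> triangle_ni (rel_dist r).
Proof.
move=> r_tr x y z; rewrite /rel_dist.
by case rxy: (r x y); case ryz: (r y z); rewrite ?(r_tr _ _ _ rxy ryz) //=;
  case: (r x z).
Qed.

Lemma rel_dist_counting (R : realType) (r : rel bstring) :
  (forall x, exists y1 y2, forall y, r x y -> y \in [:: y1; y2]) ->
  counting_ni R (rel_dist r).
Proof.
move=> r_pair; exists 1%R => n x s s_uniq s_lt.
have [n_gt0|n_le0] := ltrP 0%R n; last first.
  case: s s_lt {s_uniq} => [_|y s /(_ y (mem_head _ _))]; last first.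
    by move/ltni_rel_dist=> [_ n_gt0]; move: n_le0; rewrite leNgt n_gt0.
  by rewrite mul1r exprz_ge0.
have [y1 [y2 r_y12]] := r_pair x.
have size_s : (size s <= 2)%N.
  apply: (uniq_leq_size (s2 := [:: y1; y2])) => // y /s_lt /ltni_rel_dist [rxy _].
  exact: r_y12.
case: n n_gt0 {s_lt} => [[|k]|] // _.
rewrite mul1r -exprnP -natrX ler_nat (leq_trans size_s) // expnS.
by have := expn_gt0 2 k; lia.
Qed.

Definition same_block (o : nat) : rel bstring := fun x y =>
  [&& all (pred1 false) x, all (pred1 false) y & (size x + o)./2 == (size y + o)./2].

Lemma same_block_sym o : symmetric (same_block o).
Proof. by move=> x y; rewrite /same_block eq_sym andbCA. Qed.

Lemma same_block_trans o : transitive (same_block o).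
Proof.
rewrite /same_block => y x z /and3P [-> _ /eqP <-] /and3P [_ -> /eqP ->].
by rewrite eqxx.
Qed.

Lemma same_block_pair o x :
  exists y1 y2, forall y, same_block o x y -> y \in [:: y1; y2].
Proof.
set h := (size x + o)./2.
exists (nseq (h.*2 - o) false), (nseq (h.*2.+1 - o) false).
move=> y /and3P [_ /all_pred1P y_zeros /eqP hxy]; rewrite y_zeros !inE.
have := odd_double_half (size y + o); rewrite -hxy -/h.
by case: odd => /= size_y; apply/orP; [right|left]; apply/eqP; congr nseq; lia.
Qed.

Lemma same_block_zeros o a b :
  same_block o (nseq a false) (nseq b false) = ((a + o)./2 == (b + o)./2).
Proof.
have all_zeros k : all (pred1 false) (nseq k false) by apply/all_pred1P; rewrite size_nseq.
by rewrite /same_block !all_zeros !size_nseq.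
Qed.

Definition block_dist (o : nat) : bstring -> bstring -> natinf :=
  rel_dist (same_block o).

Lemma same_block_succ k : same_block (odd k) (nseq k false) (nseq k.+1 false).
Proof. by rewrite same_block_zeros addSn -uphalfE uphalf_half oddD oddb addbb. Qed.

Definition pblock_enum (o : nat) : prf :=
  let A := pcantor_fst (pcantor_fst (PProj 0)) in
  let B := pcantor_snd (pcantor_fst (PProj 0)) in
  let M := pcantor_snd (PProj 0) in
  pmul (peq (phalf (padd A (pconst o))) (phalf (padd B (pconst o))))
       (psucc (pcode2 (pcode2 (pzeros A) (pzeros B)) (pPosz (psucc M)))).

Lemma block_dist_usc o : upper_semicomputable (block_dist o).
Proof.
pose a t := cantor_fst (cantor_fst t); pose b t := cantor_snd (cantor_fst t).
apply: (@comp_enum_filtered _ _ (pblock_enum o)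
  (fun t => (a t + o)./2 == (b t + o)./2)
  (fun t => (nseq (a t) false, nseq (b t) false, Posz (cantor_snd t).+1))).
  move=> t; rewrite prf_eval_mul prf_eval_eq !prf_eval_half !prf_eval_add.
  rewrite prf_eval_succ !prf_eval_code2 !prf_eval_zeros prf_eval_Posz prf_eval_succ.
  by rewrite !prf_eval_cantor_snd !prf_eval_cantor_fst !prf_eval_const.
move=> [[x y] n] /=; rewrite ltni_rel_dist; split.
  move=> [/and3P [/all_pred1P x_zeros /all_pred1P y_zeros size_xy]].
  case: n => [[|m]|] // _.
  exists (cantor (cantor (size x) (size y)) m);
    by rewrite /a /b !cantor_fstK !cantor_sndK -?x_zeros -?y_zeros.
by move=> [t same_t [<- <- <-]]; rewrite same_block_zeros.
Qed.

Local Open Scope ring_scope.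

Lemma counting_cond_injective {R : realType} {lt : bstring -> bstring -> int -> Prop}
    {x n} {f : nat -> bstring} :
  injective f -> (forall k, lt x (f k) n) -> ~ counting_cond R lt.
Proof.
move=> f_inj lt_f [c count_c].
set N := Num.bound `|c * 2 ^ n|.
have : N%:R <= c * 2 ^ n.
  have := count_c n x (mkseq f N) (mkseq_uniq N f_inj); rewrite size_mkseq.
  by apply=> _ /mapP [k _ ->].
by rewrite leNgt (le_lt_trans (ler_norm _)) // archi_boundP.
Qed.

Lemma triangle_chain_le0 {R : realType} {E : bstring -> bstring -> R} (f : nat -> bstring) :
  triangle_R E -> (forall k, E (f k) (f k.+1) <= 0) -> forall k, E (f 0%N) (f k.+1) <= 0.
Proof.
move=> E_tri E_step; elim=> [|k IH]; first exact: E_step.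
by apply: le_trans (E_tri _ (f k.+1) _) _; rewrite -(addr0 0) lerD.
Qed.

Lemma le_block_dists_succ {R : realType} {E : bstring -> bstring -> R} k :
  (forall x y, le_real_ni (E x y) (block_dist 0 x y)) ->
  (forall x y, le_real_ni (E x y) (block_dist 1 x y)) ->
  E (nseq k false) (nseq k.+1 false) <= 0.
Proof.
move=> le_E0 le_E1; have := same_block_succ k.
case: (odd k) => same_k; [have := le_E1 (nseq k false) (nseq k.+1 false) |
                          have := le_E0 (nseq k false) (nseq k.+1 false)];
by rewrite /block_dist /rel_dist same_k.
Qed.

Theorem proposition3 (R : realType) :
  exists E1 E2 : bstring -> bstring -> natinf,
    [/\ upper_semicomputable E1, symmetric_ni E1, triangle_ni E1 & counting_ni R E1] /\
    [/\ upper_semicomputable E2, symmetric_ni E2, triangle_ni E2 & counting_ni R E2] /\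
    ~ (exists E : bstring -> bstring -> R,
         [/\ forall x y, 0 <= E x y,
             forall x y, le_real_ni (E x y) (E1 x y),
             forall x y, le_real_ni (E x y) (E2 x y),
             counting_R E & triangle_R E]).
Proof.
have block_dist_ok o : [/\ upper_semicomputable (block_dist o),
    symmetric_ni (block_dist o), triangle_ni (block_dist o) & counting_ni R (block_dist o)].
  split; [exact: block_dist_usc | exact/rel_dist_sym/same_block_sym |
          exact/rel_dist_triangle/same_block_trans | exact/rel_dist_counting/same_block_pair].
exists (block_dist 0), (block_dist 1).
split; [exact: block_dist_ok | split; first exact: block_dist_ok].
move=> [E [_ le_E0 le_E1 E_count E_tri]].
have E_zeros_le0 := triangle_chain_le0 (fun k => nseq k false) E_tri
  (fun k => le_block_dists_succ k le_E0 le_E1).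
have zeros_inj : injective (fun k => nseq k.+1 false).
  by move=> i j /(congr1 size); rewrite !size_nseq => -[].
apply: (counting_cond_injective (x := [::]) (n := 1) zeros_inj _ E_count) => k.
exact: le_lt_trans (E_zeros_le0 k) ltr01.
Qed.
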